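(* Let $A$ be a set with a ternary operation $p\colon A^3\to A$ and two constants $0,1\in A$ satisfying, for all $a,b,c,b_1,b_2,b_3\in A$: (T1) $p(0,a,1)=a$; (T2) $p(a,b,a)=a$; (T3) $p(a,p(b_1,b_2,b_3),c)=p(p(a,b_1,c),b_2,p(a,b_3,c))$; (T4) $p(a,0,b)=a=p(b,1,a)$. Define $\bar{a}=p(1,a,0)$, $a\cdot b=p(0,a,b)$, $a\circ b=p(a,b,1)$ and $a+b=p(a,b,\bar a)$. Then the following conditions are equivalent: (i) $(A,\circ,\cdot,\bar{()},0,1)$ is a Boolean algebra (with $\circ$ as join, $\cdot$ as meet, $\bar{()}$ as complement, $0$ as bottom and $1$ as top); (ii) $(A,+,\cdot,0,1)$ is a Boolean ring; (iii) $p(a,b,c)=(\bar{b}\cdot a)\circ (b\cdot c)$ for all $a,b,c\in A$; (iv) $p(a,a,b)=a\cdot b$ for all $a,b\in A$; (v) $p(a,b,b)=a\circ b$ for all $a,b\in A$.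
   Context: A Boolean ring is a unitary ring (with additive identity $0$ and multiplicative identity $1$) in which every element $x$ satisfies $x\cdot x=x$. *)

Definition tbar {A : Type} (p : A -> A -> A -> A) (z o : A) (a : A) : A := p o a z.
Definition tdot {A : Type} (p : A -> A -> A -> A) (z : A) (a b : A) : A := p z a b.
Definition tcirc {A : Type} (p : A -> A -> A -> A) (o : A) (a b : A) : A := p a b o.
Definition tplus {A : Type} (p : A -> A -> A -> A) (z o : A) (a b : A) : A :=
  p a b (tbar p z o a).

Definition is_boolean_algebra {A : Type} (join meet : A -> A -> A)
  (compl : A -> A) (bot top : A) : Prop :=
  (forall a b c, join a (join b c) = join (join a b) c) /\
  (forall a b c, meet a (meet b c) = meet (meet a b) c) /\
  (forall a b, join a b = join b a) /\
  (forall a b, meet a b = meet b a) /\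
  (forall a b, join a (meet a b) = a) /\
  (forall a b, meet a (join a b) = a) /\
  (forall a b c, meet a (join b c) = join (meet a b) (meet a c)) /\
  (forall a, join a bot = a) /\
  (forall a, meet a top = a) /\
  (forall a, join a (compl a) = top) /\
  (forall a, meet a (compl a) = bot).

Definition is_unitary_ring {A : Type} (add mul : A -> A -> A) (zero one : A) : Prop :=
  (forall a b c, add a (add b c) = add (add a b) c) /\
  (forall a b, add a b = add b a) /\
  (forall a, add zero a = a) /\
  (forall a, exists b, add a b = zero) /\
  (forall a b c, mul a (mul b c) = mul (mul a b) c) /\
  (forall a, mul one a = a) /\
  (forall a, mul a one = a) /\
  (forall a b c, mul a (add b c) = add (mul a b) (mul a c)) /\
  (forall a b c, mul (add a b) c = add (mul a c) (mul b c)).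

Definition is_boolean_ring {A : Type} (add mul : A -> A -> A) (zero one : A) : Prop :=
  is_unitary_ring add mul zero one /\ (forall a, mul a a = a).

From Stdlib Require Import Setoid.

(* Condition (iv), p(a,a,b) = a.b, is the hub.  Since bar (p a b c) = p (bar a) b (bar c),
   the involution bar, which swaps 0 and 1, exchanges (iv) and (v).
   Under (iv), x |-> a + x is an involution, and cancelling a + _ together with the
   Shannon expansion y = p(bar a . y, a, a . y) yields the absorption laws and the
   commutativity of the product, hence (i).  In a Boolean algebra, splitting p(a,b,c)
   along c and bar c gives the multiplexer form (iii), which at b = a is (iv).  The
   multiplexer form makes + commutative and distributive, giving (ii); conversely in a
   Boolean ring a + a = 0, and additive cancellation applied to T3 returns (iv). *)

Section BooleanAlgebra.
Variables (A : Type) (join meet : A -> A -> A) (compl : A -> A) (bot top : A).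
Hypothesis BA : is_boolean_algebra join meet compl bot top.

Lemma meet_idem a : meet a a = a.
Proof.
  destruct BA as (_ & _ & _ & _ & jm & mj & _).
  rewrite <- (jm a a) at 2. apply mj.
Qed.

Lemma join_meet_mux x y w :
  join (join (meet x w) (meet y w)) (meet (compl y) (meet x (compl w)))
  = join (meet (compl y) x) (meet y w).
Proof.
  destruct BA as (ja & ma & jc & mc & jm & _ & dist & _ & mt & jcompl & _).
  assert (split_y : meet x w = join (meet (meet x w) y) (meet (meet x w) (compl y))).
  { rewrite <- dist, jcompl, mt. reflexivity. }
  assert (absorb_y : join (meet (meet x w) y) (meet y w) = meet y w).
  { rewrite (mc (meet x w) y), (mc x w), ma, jc, jm. reflexivity. }
  assert (merge_w : join (meet (meet x w) (compl y)) (meet (compl y) (meet x (compl w)))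
                    = meet (compl y) x).
  { rewrite (mc (meet x w) (compl y)), <- !dist, jcompl, mt. reflexivity. }
  rewrite split_y at 1.
  rewrite (jc (meet (meet x w) y)), <- (ja _ _ (meet y w)), absorb_y.
  rewrite (jc _ (meet y w)), <- ja, merge_w, jc. reflexivity.
Qed.

End BooleanAlgebra.

Section Rings.
Variables (A : Type) (add mul : A -> A -> A) (zero one : A).

Lemma addrI (R : is_unitary_ring add mul zero one) a x y : add a x = add a y -> x = y.
Proof.
  destruct R as (addA & addC & add0 & addN & _).
  intro E. destruct (addN a) as [b ab0].
  rewrite <- (add0 x), <- (add0 y), <- ab0, (addC a b), <- !addA, E.
  reflexivity.
Qed.

Lemma addrr (BR : is_boolean_ring add mul zero one) a : add a a = zero.
Proof.
  destruct BR as (R & idem).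
  pose proof R as (addA & addC & add0 & _ & _ & _ & _ & mulDr & mulDl).
  apply (addrI R (add a a)).
  rewrite (addC _ zero), add0.
  rewrite <- (idem (add a a)) at 3.
  rewrite mulDr, mulDl, idem. reflexivity.
Qed.

End Rings.

Section TernaryAlgebra.
Variables (A : Type) (p : A -> A -> A -> A) (z o : A).
Hypothesis T1 : forall a, p z a o = a.
Hypothesis T2 : forall a b, p a b a = a.
Hypothesis T3 : forall a b1 b2 b3 c,
  p a (p b1 b2 b3) c = p (p a b1 c) b2 (p a b3 c).
Hypothesis T4 : forall a b, p a z b = a /\ p b o a = a.

Local Notation bar a := (p o a z).
Local Notation dot a b := (p z a b).
Local Notation circ a b := (p a b o).
Local Notation plus a b := (p a b (bar a)).

Lemma p_mid0 a b : p a z b = a.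
Proof. apply T4. Qed.

Lemma p_mid1 a b : p a o b = b.
Proof. apply T4. Qed.

Lemma bar_p a b c : bar (p a b c) = p (bar a) b (bar c).
Proof. apply T3. Qed.

Lemma barK a : bar (bar a) = a.
Proof. rewrite bar_p, p_mid0, p_mid1. apply T1. Qed.

Lemma p_bar a b c : p a (bar b) c = p c b a.
Proof. rewrite T3, p_mid0, p_mid1. reflexivity. Qed.

Lemma p_swap a b c : p a b c = p c (bar b) a.
Proof. symmetry. apply p_bar. Qed.

Lemma dotA a b c : dot a (dot b c) = dot (dot a b) c.
Proof. rewrite T3, p_mid0. reflexivity. Qed.

Lemma circA a b c : circ a (circ b c) = circ (circ a b) c.
Proof. rewrite T3, p_mid1. reflexivity. Qed.

Lemma p_dot x a b y : p x (dot a b) y = p x a (p x b y).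
Proof. rewrite T3, p_mid0. reflexivity. Qed.

Lemma bar_dot a b : bar (dot a b) = circ (bar b) (bar a).
Proof. rewrite bar_p, p_mid0, (p_bar (bar b) a o). reflexivity. Qed.

Lemma plusA a b c : plus a (plus b c) = plus (plus a b) c.
Proof. rewrite (T3 a b c (bar b) (bar a)), p_bar, bar_p, barK. reflexivity. Qed.

Lemma left_dup_iff_right_dup :
  (forall a b, p a a b = dot a b) <-> (forall a b, p a b b = circ a b).
Proof.
  split; intros dup a b;
    pose proof (f_equal (fun t => bar t) (dup (bar b) (bar a))) as E; cbv beta in E.
  - rewrite (bar_p (bar b)), (bar_p z), !barK, p_mid0, !p_bar in E. exact E.
  - rewrite (bar_p (bar b) (bar a)), (bar_p (bar b) (bar a) o), !barK, p_mid1, !p_bar in E.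
    exact E.
Qed.

Lemma mux_of_boolean_algebra :
  is_boolean_algebra (tcirc p o) (tdot p z) (tbar p z o) z o ->
  forall x y w, p x y w = circ (dot (bar y) x) (dot y w).
Proof.
  intros BA x y w.
  pose proof (join_meet_mux _ _ _ _ _ _ BA x y w) as mux.
  pose proof (meet_idem _ _ _ _ _ _ BA) as dot_idem.
  unfold is_boolean_algebra, tcirc, tdot, tbar in BA, dot_idem.
  destruct BA as (_ & _ & circC & dotC & circ_dot & _ & distr & _ & dot1 & circ_bar & dot_bar).
  assert (split_w : p x y w = circ (dot (p x y w) w) (dot (p x y w) (bar w))).
  { rewrite <- distr, circ_bar, dot1. reflexivity. }
  assert (on_w : dot (p x y w) w = circ (dot x w) (dot y w)).
  { rewrite (T3 z x y w w), dot_idem, (T3 (dot x w) z y w o), p_mid0.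
    rewrite (circC (dot x w) w), (dotC x w), circ_dot. reflexivity. }
  assert (off_w : dot (p x y w) (bar w) = dot (bar y) (dot x (bar w))).
  { rewrite (T3 z x y w (bar w)), dot_bar, p_bar. reflexivity. }
  rewrite split_w, on_w, off_w. exact mux.
Qed.

Lemma left_dup_of_mux :
  (forall x y w, p x y w = circ (dot (bar y) x) (dot y w)) ->
  forall a b, p a a b = dot a b.
Proof.
  intros mux a b.
  assert (dot_bar : forall x, dot x (bar x) = z).
  { intro x. pose proof (mux o (bar x) o) as E.
    rewrite T2, barK, !T1, p_bar in E.
    transitivity (bar (p o x x)).
    - rewrite bar_p, p_mid1. reflexivity.
    - rewrite <- E. apply p_mid1. }
  pose proof (dot_bar (bar a)) as dot_bar_l. rewrite barK in dot_bar_l.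
  rewrite (mux a a b), dot_bar_l. apply T1.
Qed.

Lemma left_dup_of_boolean_ring :
  is_boolean_ring (tplus p z o) (tdot p z) z o -> forall a b, p a a b = dot a b.
Proof.
  intros BR a b.
  pose proof (addrI _ _ _ _ _ (proj1 BR) a) as plus_inj.
  pose proof (addrr _ _ _ _ _ BR a) as plus_self.
  destruct BR as ((_ & _ & _ & _ & _ & _ & _ & distr & _) & dot_idem).
  unfold tplus, tdot, tbar in *.
  apply plus_inj.
  rewrite (T3 a a a b (bar a)), plus_self, distr, dot_idem. reflexivity.
Qed.

Section LeftDup.
Hypothesis dup : forall a b, p a a b = dot a b.

Lemma right_dup a b : p a b b = circ a b.
Proof. revert a b. apply left_dup_iff_right_dup, dup. Qed.

Lemma dot_idem a : dot a a = a.
Proof. rewrite <- dup. apply T2. Qed.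

Lemma dot_bar_l a : dot (bar a) a = z.
Proof. rewrite p_bar, dup. apply T2. Qed.

Lemma dot_bar_r a : dot a (bar a) = z.
Proof. rewrite <- (barK a) at 1. apply dot_bar_l. Qed.

Lemma circ_bar_l a : circ (bar a) a = o.
Proof. rewrite <- (barK a) at 2. rewrite <- bar_dot, dot_bar_l. apply p_mid0. Qed.

Lemma circ_bar_r a : circ a (bar a) = o.
Proof. rewrite <- (barK a) at 1. rewrite <- bar_dot, dot_bar_r. apply p_mid0. Qed.

Lemma plusK a x : plus a (plus a x) = x.
Proof.
  rewrite (T3 a a x (bar a) (bar a)), dup, dot_bar_r, right_dup, circ_bar_r. apply T1.
Qed.

Lemma plus_inj a x y : plus a x = plus a y -> x = y.
Proof. intro E. rewrite <- (plusK a x), <- (plusK a y), E. reflexivity. Qed.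

Lemma plus_dot a x : plus a (dot a x) = dot a (plus a x).
Proof. rewrite (T3 a z a x (bar a)), p_mid0, dup. reflexivity. Qed.

Lemma shannon_l a y : p (dot (bar a) y) a (dot a y) = y.
Proof. rewrite <- T3, right_dup, circ_bar_l. apply p_mid1. Qed.

Lemma dot_dot_bar a b : dot (dot a b) (bar a) = z.
Proof.
  rewrite <- (dot_idem (dot (dot a b) (bar a))), <- (dotA (dot a b) (bar a)).
  rewrite (dotA (bar a) (dot a b)), (dotA (bar a) a), dot_bar_l, !p_mid0. apply T2.
Qed.

Lemma dot_bar_dot a b : dot (dot (bar a) b) a = z.
Proof. rewrite <- (barK a) at 2. apply dot_dot_bar. Qed.

Lemma dot_circ a b : dot a (circ a b) = a.
Proof.
  apply (plus_inj a).
  rewrite plus_dot, (T3 a a b o (bar a)), dup, dot_bar_r, p_mid1, (dotA a b).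
  apply dot_dot_bar.
Qed.

Lemma circ_dot_l a b : circ (dot a b) a = a.
Proof.
  apply (plus_inj a).
  rewrite (T3 a (dot a b) a o (bar a)), p_mid1, p_swap, (dup (bar a)), plus_dot.
  rewrite (dotA (bar a) a), dot_bar_l, p_mid0, dup, dot_bar_r. reflexivity.
Qed.

Lemma dot_absorb_r a b : dot (dot a b) a = dot a b.
Proof. rewrite <- (circ_dot_l a b) at 2. apply dot_circ. Qed.

Lemma dot_absorb_l a b : dot a (dot b a) = dot b a.
Proof.
  rewrite <- (shannon_l a (dot b a)) at 2.
  rewrite (dotA (bar a) b a), dot_bar_dot, (dotA a a), dot_idem. reflexivity.
Qed.

Lemma dotC a b : dot a b = dot b a.
Proof. rewrite <- (dot_absorb_r a b), <- (dotA a b a). apply dot_absorb_l. Qed.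

Lemma circC a b : circ a b = circ b a.
Proof.
  rewrite <- (barK a), <- (barK b), <- !bar_dot, (dotC (bar b)). reflexivity.
Qed.

Lemma circ_dot a b : circ a (dot a b) = a.
Proof. rewrite T3, p_mid0, dup. apply dot_circ. Qed.

Lemma dot_circ_distr a b c : dot a (circ b c) = circ (dot a b) (dot a c).
Proof.
  rewrite (dotC a (circ b c)), (T3 z b c o a), p_mid1, (dotC a c), p_dot.
  rewrite circ_dot_l, (dotC b a). reflexivity.
Qed.

Lemma boolean_algebra_of_left_dup :
  is_boolean_algebra (tcirc p o) (tdot p z) (tbar p z o) z o.
Proof.
  repeat split.
  - exact circA.
  - exact dotA.
  - exact circC.
  - exact dotC.
  - exact circ_dot.
  - exact dot_circ.
  - exact dot_circ_distr.
  - intro a. apply p_mid0.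
  - exact T1.
  - exact circ_bar_r.
  - exact dot_bar_r.
Qed.

Lemma mux_of_left_dup x y w : p x y w = circ (dot (bar y) x) (dot y w).
Proof. apply mux_of_boolean_algebra, boolean_algebra_of_left_dup. Qed.

Lemma plusC a b : plus a b = plus b a.
Proof.
  rewrite (mux_of_left_dup a b), (mux_of_left_dup b a), (dotC (bar b) a), (dotC b (bar a)).
  apply circC.
Qed.

Lemma plus_dot_l a b : plus (dot a b) a = dot a (bar b).
Proof.
  rewrite (mux_of_left_dup (dot a b) a), (dotA (bar a) a b), dot_bar_l, p_mid0, T1.
  rewrite bar_dot, dot_circ_distr, dot_bar_r. apply p_mid0.
Qed.

Lemma dot_plus_distr a b c : dot a (plus b c) = plus (dot a b) (dot a c).
Proof.
  rewrite (dotC a (plus b c)), (T3 z b c (bar b) a).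
  rewrite (dotC a c), (p_dot (dot a b) c a), plus_dot_l, (dotC b a), (dotC (bar b) a).
  reflexivity.
Qed.

Lemma boolean_ring_of_left_dup : is_boolean_ring (tplus p z o) (tdot p z) z o.
Proof.
  split; [repeat split | exact dot_idem].
  - exact plusA.
  - exact plusC.
  - intro a. unfold tplus, tbar. rewrite p_mid0. apply T1.
  - intro a. exists a. unfold tplus, tbar. rewrite dup. apply dot_bar_r.
  - exact dotA.
  - intro a. apply p_mid1.
  - exact T1.
  - exact dot_plus_distr.
  - intros a b c. unfold tdot, tplus, tbar.
    rewrite dotC, dot_plus_distr, (dotC c a), (dotC c b). reflexivity.
Qed.

End LeftDup.
End TernaryAlgebra.

Theorem theorem1 (A : Type) (p : A -> A -> A -> A) (z o : A)
  (T1 : forall a, p z a o = a)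
  (T2 : forall a b, p a b a = a)
  (T3 : forall a b1 b2 b3 c,
          p a (p b1 b2 b3) c = p (p a b1 c) b2 (p a b3 c))
  (T4 : forall a b, p a z b = a /\ p b o a = a) :
  let bar := tbar p z o in
  let dot := tdot p z in
  let circ := tcirc p o in
  let plus := tplus p z o in
  let C1 := is_boolean_algebra circ dot bar z o in
  let C2 := is_boolean_ring plus dot z o in
  let C3 := forall a b c, p a b c = circ (dot (bar b) a) (dot b c) in
  let C4 := forall a b, p a a b = dot a b in
  let C5 := forall a b, p a b b = circ a b in
  (C1 <-> C2) /\ (C2 <-> C3) /\ (C3 <-> C4) /\ (C4 <-> C5).
Proof.
  intros bar dot circ plus C1 C2 C3 C4 C5.
  assert (C4_C1 : C4 -> C1) by exact (boolean_algebra_of_left_dup A p z o T1 T2 T3 T4).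
  assert (C1_C3 : C1 -> C3) by exact (mux_of_boolean_algebra A p z o T3 T4).
  assert (C3_C4 : C3 -> C4) by exact (left_dup_of_mux A p z o T1 T2 T3 T4).
  assert (C4_C2 : C4 -> C2) by exact (boolean_ring_of_left_dup A p z o T1 T2 T3 T4).
  assert (C2_C4 : C2 -> C4) by exact (left_dup_of_boolean_ring A p z o T3).
  assert (C4_C5 : C4 <-> C5) by exact (left_dup_iff_right_dup A p z o T1 T3 T4).
  tauto.
Qed.
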